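(* Let $f_1,f_2$ be strongly hyperbolic functions. Any two distinct elements $C,D\in\mathcal{C}^-(f_1,f_2)$ have at most two points in common.
   Context: Identify $\mathbb{S}^1$ with $\mathbb{R}\cup\{\infty\}$, $\mathcal{P}=\mathbb{S}^1\times\mathbb{S}^1$, $\mathbb{R}^+=(0,\infty)$. A function $f:\mathbb{R}^+\to\mathbb{R}^+$ is strongly hyperbolic if: (1) $\lim_{x\to0+}f(x)=+\infty$, $\lim_{x\to+\infty}f(x)=0$; (2) $f$ strictly convex; (3) $\lim_{x\to+\infty}f(x+b)/f(x)=1$ for each $b\in\mathbb{R}$; (4) $f$ differentiable; (5) $\ln|f'|$ strictly convex. For $a>0$, $b,c\in\mathbb{R}$: $f_{a,b,c}(x)=af_1(x+b)+c$ for $x>-b$, $f_{a,b,c}(x)=-af_2(-x-b)+c$ for $x<-b$; $\overline{f_{a,b,c}}=\{(x,f_{a,b,c}(x)):x\ne-b\}\cup\{(-b,\infty),(\infty,c)\}$; $\overline{l_{s,t}}=\{(x,sx+t):x\in\mathbb{R}\}\cup\{(\infty,\infty)\}$; $\mathcal{C}^-(f_1,f_2)=\{\overline{f_{a,b,c}}:a>0,b,c\in\mathbb{R}\}\cup\{\overline{l_{s,t}}:s<0,t\in\mathbb{R}\}$, a set of subsets of $\mathcal{P}$. *)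

From Stdlib Require Import Reals Lra.
From Coquelicot Require Import Coquelicot.
Open Scope R_scope.

(* S^1 = R ∪ {∞}: [Some x] is the real x, [None] is ∞. *)
Definition S1 := option R.
Definition Pt := (S1 * S1)%type.

Definition strictly_convex_pos (g : R -> R) : Prop :=
  forall x y t, 0 < x -> 0 < y -> x <> y -> 0 < t < 1 ->
    g (t * x + (1 - t) * y) < t * g x + (1 - t) * g y.

(* f : R^+ -> R^+ strongly hyperbolic; f is given as a total function on R,
   only its values on (0, +oo) matter. *)
Definition strongly_hyperbolic (f : R -> R) : Prop :=
  (forall x, 0 < x -> 0 < f x) /\
  filterlim f (at_right 0) (Rbar_locally p_infty) /\
  filterlim f (Rbar_locally p_infty) (locally 0) /\
  strictly_convex_pos f /\
  (forall b : R, filterlim (fun x => f (x + b) / f x) (Rbar_locally p_infty) (locally 1)) /\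
  (forall x, 0 < x -> ex_derive f x) /\
  strictly_convex_pos (fun x => ln (Rabs (Derive f x))).

Definition f_abc (f1 f2 : R -> R) (a b c : R) (x : R) : R :=
  if Rlt_dec (- b) x then a * f1 (x + b) + c else - a * f2 (- x - b) + c.

Definition fbar (f1 f2 : R -> R) (a b c : R) : Pt -> Prop :=
  fun p => (exists x, x <> - b /\ p = (Some x, Some (f_abc f1 f2 a b c x)))
           \/ p = (Some (- b), None) \/ p = (None, Some c).

Definition lbar (s t : R) : Pt -> Prop :=
  fun p => (exists x, p = (Some x, Some (s * x + t))) \/ p = (None, None).

Definition in_Cminus (f1 f2 : R -> R) (C : Pt -> Prop) : Prop :=
  (exists a b c, 0 < a /\ C = fbar f1 f2 a b c) \/
  (exists s t, s < 0 /\ C = lbar s t).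

From Stdlib Require Import Reals Lra.
From Coquelicot Require Import Coquelicot.
Open Scope R_scope.

(* Common points are counted through their abscissae.  Two distinct lines
   share the point (oo, oo) and at most one finite point.  A curve f_{a,b,c}
   and a line of negative slope meet only at finite points; on each branch these
   form a level set of a strictly convex function, and s < 0 prevents both
   branches from contributing.  For two curves with b' < b, the equation
   f_{a,b,c} = f_{a',b',c'} is, between the poles, a level set of a strictly
   convex function, and outside them of the form A f(y + d) - A' f(y) = c' - c
   with d > 0.  By strict convexity of ln |f'| the derivative of the left-hand
   side changes sign at most once, so it takes each value at most twice, and at
   most once when c' <= c since it tends to 0.  Sign considerations leave a
   single interval with solutions when c < c', and only the two outer ones, with
   one solution each, when c' <= c.  Two curves share a point at infinity only
   if b = b' or c = c', and then they have at most one finite common point. *)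

Definition at_most_one {T : Type} (S : T -> Prop) : Prop :=
  forall p q, S p -> S q -> p = q.

Definition at_most_two {T : Type} (S : T -> Prop) : Prop :=
  forall p q r, S p -> S q -> S r -> p = q \/ q = r \/ p = r.

Section AtMost.
Context {T : Type}.
Implicit Types S A B : T -> Prop.

Lemma at_most_one_eq (p0 : T) : at_most_one (fun p => p = p0).
Proof. intros p q -> ->; reflexivity. Qed.

Lemma at_most_one_sub S A : (forall p, S p -> A p) -> at_most_one A -> at_most_one S.
Proof. intros HSA HA p q Hp Hq; apply HA; auto. Qed.

Lemma at_most_two_sub S A : (forall p, S p -> A p) -> at_most_two A -> at_most_two S.
Proof. intros HSA HA p q r Hp Hq Hr; apply HA; auto. Qed.

Lemma at_most_one_image {U : Type} S (Z : U -> Prop) (g : U -> T) :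
  (forall p, S p -> exists x, Z x /\ p = g x) -> at_most_one Z -> at_most_one S.
Proof.
intros Himg HZ p q Hp Hq.
destruct (Himg p Hp) as [x [Hx ->]], (Himg q Hq) as [y [Hy ->]].
now rewrite (HZ x y Hx Hy).
Qed.

Lemma at_most_two_image {U : Type} S (Z : U -> Prop) (g : U -> T) :
  (forall p, S p -> exists x, Z x /\ p = g x) -> at_most_two Z -> at_most_two S.
Proof.
intros Himg HZ p q r Hp Hq Hr.
destruct (Himg p Hp) as [x [Hx ->]], (Himg q Hq) as [y [Hy ->]],
  (Himg r Hr) as [z [Hz ->]].
destruct (HZ x y z Hx Hy Hz) as [->|[->| ->]]; auto.
Qed.

Lemma at_most_two_union S A B :
  (forall p, S p -> A p \/ B p) -> at_most_one A -> at_most_one B -> at_most_two S.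
Proof.
intros HS HA HB p q r Hp Hq Hr.
destruct (HS p Hp), (HS q Hq), (HS r Hr);
  solve [ left; auto | right; left; auto | right; right; auto ].
Qed.

Lemma at_most_one_union_excl S A B :
  (forall p, S p -> A p \/ B p) -> at_most_one A -> at_most_one B ->
  (forall p q, A p -> B q -> False) -> at_most_one S.
Proof.
intros HS HA HB Hex p q Hp Hq.
destruct (HS p Hp), (HS q Hq); auto; exfalso; eauto.
Qed.

Lemma at_most_two_union_excl S A B :
  (forall p, S p -> A p \/ B p) -> at_most_two A -> at_most_two B ->
  (forall p q, A p -> B q -> False) -> at_most_two S.
Proof.
intros HS HA HB Hex p q r Hp Hq Hr.
destruct (HS p Hp), (HS q Hq), (HS r Hr); auto; exfalso; eauto.
Qed.

End AtMost.

Lemma at_most_one_of_lt (P : R -> Prop) :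
  (forall x y, P x -> P y -> x < y -> False) -> at_most_one P.
Proof.
intros H x y Hx Hy.
destruct (Rtotal_order x y) as [h|[h|h]]; auto; exfalso; eauto.
Qed.

Lemma at_most_two_of_lt (P : R -> Prop) :
  (forall x y z, P x -> P y -> P z -> x < y < z -> False) -> at_most_two P.
Proof.
intros H x y z Hx Hy Hz.
destruct (Req_dec x y); auto. destruct (Req_dec y z); auto.
destruct (Req_dec x z); auto.
exfalso.
destruct (Rtotal_order x y) as [h1|[h1|h1]]; try lra;
  destruct (Rtotal_order y z) as [h2|[h2|h2]]; try lra;
  destruct (Rtotal_order x z) as [h3|[h3|h3]]; try lra;
  solve [ apply (H x y z); auto | apply (H x z y); auto | apply (H y x z); auto
        | apply (H z x y); auto | apply (H y z x); auto | apply (H z y x); auto ].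
Qed.

Definition strictly_convex_on (I : R -> Prop) (g : R -> R) : Prop :=
  forall x y t, I x -> I y -> x <> y -> 0 < t < 1 ->
    g (t * x + (1 - t) * y) < t * g x + (1 - t) * g y.

Section StrictlyConvex.
Variables (I : R -> Prop) (g : R -> R).
Hypothesis Hg : strictly_convex_on I g.

Lemma strictly_convex_on_chord p q r : I p -> I r -> p < q < r ->
  (g q - g p) * (r - p) < (g r - g p) * (q - p) /\
  (g r - g p) * (r - q) < (g r - g q) * (r - p).
Proof.
intros Ip Ir Hpqr.
set (t := (r - q) / (r - p)).
assert (Ht : 0 < t < 1).
{ unfold t; split; [apply Rdiv_lt_0_compat; lra|].
  apply Rmult_lt_reg_r with (r - p); [lra|]. field_simplify; lra. }
pose proof (Hg p r t Ip Ir ltac:(lra) Ht) as H.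
replace (t * p + (1 - t) * r) with q in H by (unfold t; field; lra).
assert (Et : t * (r - p) = r - q) by (unfold t; field; lra).
split; nra.
Qed.

Lemma strictly_convex_on_increment_lt z w d : I z -> I (w + d) -> z < w -> 0 < d ->
  g (z + d) - g z < g (w + d) - g w.
Proof.
intros Iz Iwd Hzw Hd.
destruct (strictly_convex_on_chord z (z + d) (w + d) Iz Iwd ltac:(lra)) as [H1 _].
destruct (strictly_convex_on_chord z w (w + d) Iz Iwd ltac:(lra)) as [_ H2].
apply Rmult_lt_reg_r with (w + d - z); [lra|].
replace (z + d - z) with d in H1 by ring.
replace (w + d - w) with d in H2 by ring.
nra.
Qed.

Lemma strictly_convex_on_level_at_most_two v : at_most_two (fun x => I x /\ g x = v).
Proof.
apply at_most_two_of_lt; intros x y z [Ix Ex] [_ Ey] [Iz Ez] Hxyz.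
destruct (strictly_convex_on_chord x y z Ix Iz Hxyz) as [H _].
rewrite Ex, Ey, Ez in H. nra.
Qed.

(* The difference quotients at x increase with the step, and the smallest
   ones converge to the derivative. *)
Lemma strictly_convex_on_derive_le x y : I x -> I y -> x < y -> ex_derive g x ->
  Derive g x * (y - x) <= g y - g x.
Proof.
intros Ix Iy Hxy Hder.
apply Rnot_lt_le; intro Hlt.
set (s := (g y - g x) / (y - x)).
assert (Hs : s < Derive g x).
{ apply Rmult_lt_reg_r with (y - x); [lra|]. unfold s. field_simplify; lra. }
destruct (proj1 (is_derive_Reals _ _ _) (Derive_correct _ _ Hder) (Derive g x - s))
  as [delta Hdelta]; [lra|].
set (h := Rmin (delta / 2) ((y - x) / 2)).
assert (Hh : 0 < h < y - x /\ h < delta).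
{ pose proof (cond_pos delta). pose proof (Rmin_l (delta / 2) ((y - x) / 2)).
  pose proof (Rmin_r (delta / 2) ((y - x) / 2)).
  unfold h; repeat split; try lra. apply Rmin_pos; lra. }
assert (Hq := Hdelta h ltac:(lra) ltac:(rewrite Rabs_pos_eq; lra)).
apply Rabs_def2 in Hq.
set (q := (g (x + h) - g x) / h) in Hq.
assert (Eq : g (x + h) - g x = q * h) by (unfold q; field; lra).
destruct (strictly_convex_on_chord x (x + h) y Ix Iy ltac:(lra)) as [Hc _].
assert (Es : g y - g x = s * (y - x)) by (unfold s; field; lra).
rewrite Eq, Es in Hc.
replace (x + h - x) with h in Hc by ring.
assert (q < s) by (apply Rmult_lt_reg_r with (h * (y - x)); nra).
lra.
Qed.

End StrictlyConvex.

Lemma strictly_convex_on_sub (I J : R -> Prop) g :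
  (forall x, I x -> J x) -> strictly_convex_on J g -> strictly_convex_on I g.
Proof. intros HIJ Hg x y t Ix Iy; apply Hg; auto. Qed.

Lemma strictly_convex_on_add I g h :
  strictly_convex_on I g -> strictly_convex_on I h ->
  strictly_convex_on I (fun x => g x + h x).
Proof.
intros Hg Hh x y t Ix Iy Hxy Ht.
pose proof (Hg x y t Ix Iy Hxy Ht); pose proof (Hh x y t Ix Iy Hxy Ht); lra.
Qed.

Lemma strictly_convex_on_add_linear I g s :
  strictly_convex_on I g -> strictly_convex_on I (fun x => g x + s * x).
Proof. intros Hg x y t Ix Iy Hxy Ht; pose proof (Hg x y t Ix Iy Hxy Ht); nra. Qed.

Lemma strictly_convex_on_translate f a b :
  strictly_convex_on (fun x => 0 < x) f -> 0 < a ->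
  strictly_convex_on (fun x => - b < x) (fun x => a * f (x + b)).
Proof.
intros Hf Ha x y t Hx Hy Hxy Ht.
replace (t * x + (1 - t) * y + b) with (t * (x + b) + (1 - t) * (y + b)) by ring.
pose proof (Hf (x + b) (y + b) t ltac:(lra) ltac:(lra) ltac:(lra) Ht); nra.
Qed.

Lemma strictly_convex_on_reflect f a b :
  strictly_convex_on (fun x => 0 < x) f -> 0 < a ->
  strictly_convex_on (fun x => x < - b) (fun x => a * f (- x - b)).
Proof.
intros Hf Ha x y t Hx Hy Hxy Ht.
replace (- (t * x + (1 - t) * y) - b) with (t * (- x - b) + (1 - t) * (- y - b))
  by ring.
pose proof (Hf (- x - b) (- y - b) t ltac:(lra) ltac:(lra) ltac:(lra) Ht); nra.
Qed.

Section StronglyHyperbolic.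
Variable f : R -> R.
Hypothesis Hf : strongly_hyperbolic f.

Lemma sh_pos x : 0 < x -> 0 < f x.
Proof. destruct Hf as [H _]; auto. Qed.

Lemma sh_convex : strictly_convex_on (fun x => 0 < x) f.
Proof. destruct Hf as (_ & _ & _ & H & _); exact H. Qed.

Lemma sh_ex_derive x : 0 < x -> ex_derive f x.
Proof. destruct Hf as (_ & _ & _ & _ & _ & H & _); auto. Qed.

Lemma sh_ln_abs_derive_convex :
  strictly_convex_on (fun x => 0 < x) (fun x => ln (Rabs (Derive f x))).
Proof. destruct Hf as (_ & _ & _ & _ & _ & _ & H); exact H. Qed.

Lemma sh_eventually_lt x eps : 0 < eps -> exists y, x < y /\ f y < eps.
Proof.
intros Heps. destruct Hf as (_ & _ & Hlim & _).
destruct (Hlim _ (open_lt eps 0 Heps)) as [M HM].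
exists (Rmax x M + 1); split.
- pose proof (Rmax_l x M); lra.
- apply HM; pose proof (Rmax_r x M); lra.
Qed.

Lemma sh_decreasing x y : 0 < x -> x < y -> f y < f x.
Proof.
intros Hx Hxy. apply Rnot_le_lt; intro Hle.
destruct (sh_eventually_lt y (f y) (sh_pos y ltac:(lra))) as [z [Hyz Hz]].
destruct (strictly_convex_on_chord _ _ sh_convex x y z Hx ltac:(lra) ltac:(lra))
  as [H1 H2].
nra.
Qed.

Lemma sh_derive_neg x : 0 < x -> Derive f x < 0.
Proof.
intros Hx.
pose proof (strictly_convex_on_derive_le _ _ sh_convex x (x + 1) Hx ltac:(lra)
  ltac:(lra) (sh_ex_derive x Hx)).
pose proof (sh_decreasing x (x + 1) Hx ltac:(lra)).
lra.
Qed.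

End StronglyHyperbolic.

Definition shifted_difference_level (f : R -> R) (A A' d L y : R) : Prop :=
  0 < y /\ A * f (y + d) - A' * f y = L.

Section ShiftedDifference.
Variable f : R -> R.
Hypothesis Hf : strongly_hyperbolic f.
Variables A A' d : R.
Hypotheses (HA : 0 < A) (HA' : 0 < A') (Hd : 0 < d).

Let k y := A * f (y + d) - A' * f y.
Let dk y := A * Derive f (y + d) - A' * Derive f y.

Lemma k_mvt x y : 0 < x -> x < y -> exists c, k y - k x = dk c * (y - x) /\ x < c < y.
Proof.
intros Hx Hxy. apply MVT_cor2; auto. intros c Hc.
apply is_derive_Reals. unfold k, dk.
pose proof (sh_ex_derive f Hf (c + d) ltac:(lra)).
pose proof (sh_ex_derive f Hf c ltac:(lra)).
auto_derive; auto. rewrite !Rmult_1_l; reflexivity.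
Qed.

Lemma dk_root_between L x y : shifted_difference_level f A A' d L x ->
  shifted_difference_level f A A' d L y -> x < y -> exists c, x < c < y /\ dk c = 0.
Proof.
intros [Hx Ex] [_ Ey] Hxy.
destruct (k_mvt x y Hx Hxy) as [c [E Hc]].
exists c; split; auto.
unfold k in E; rewrite Ex, Ey in E.
destruct (Rmult_integral (dk c) (y - x)); lra.
Qed.

(* With u = -f' > 0, dk x = 0 says ln u (x + d) - ln u x = ln A' - ln A, and
   the increments of the strictly convex ln u grow. *)
Lemma dk_neg_after_root x y : 0 < x -> x < y -> dk x = 0 -> dk y < 0.
Proof.
intros Hx Hxy Hroot. unfold dk in *.
set (u z := - Derive f z).
assert (Hu : forall z, 0 < z -> 0 < u z).
{ intros z Hz; unfold u; pose proof (sh_derive_neg f Hf z Hz); lra. }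
assert (Habs : forall z, 0 < z -> Rabs (Derive f z) = u z).
{ intros z Hz; apply Rabs_left, sh_derive_neg; auto. }
pose proof (strictly_convex_on_increment_lt _ _ (sh_ln_abs_derive_convex f Hf)
  x y d Hx ltac:(lra) Hxy Hd) as Hinc; simpl in Hinc.
rewrite !Habs in Hinc by lra.
pose proof (Hu x Hx); pose proof (Hu (x + d) ltac:(lra)).
pose proof (Hu y ltac:(lra)); pose proof (Hu (y + d) ltac:(lra)).
assert (Ex : ln (A * u (x + d)) = ln (A' * u x)) by (f_equal; unfold u; lra).
rewrite !ln_mult in Ex by auto.
apply Rnot_le_lt; intro Hy.
assert (Ey : ln (A * u (y + d)) <= ln (A' * u y)).
{ apply ln_le; [apply Rmult_lt_0_compat; auto | unfold u; lra]. }
rewrite !ln_mult in Ey by auto.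
lra.
Qed.

Lemma shifted_difference_level_at_most_two L :
  at_most_two (shifted_difference_level f A A' d L).
Proof.
apply at_most_two_of_lt; intros x y z Hx Hy Hz [Hxy Hyz].
destruct (dk_root_between L x y Hx Hy Hxy) as [c1 [Hc1 E1]].
destruct (dk_root_between L y z Hy Hz Hyz) as [c2 [Hc2 E2]].
pose proof (dk_neg_after_root c1 c2 ltac:(destruct Hx; lra) ltac:(lra) E1).
lra.
Qed.

(* k tends to 0 at infinity, so beyond a solution of k = L <= 0 the function
   k must somewhere be nondecreasing. *)
Lemma dk_nonneg_beyond_level L y : L <= 0 -> shifted_difference_level f A A' d L y ->
  exists c, y < c /\ 0 <= dk c.
Proof.
intros HL [Hy Ey].
destruct (Rlt_or_le (k (y + 1)) L) as [Hlt|Hge].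
- destruct (sh_eventually_lt f Hf (y + 1) (- k (y + 1) / A')) as [z [Hz1 Hz2]].
  { apply Rdiv_lt_0_compat; lra. }
  assert (Hkz : k (y + 1) < k z).
  { unfold k at 2. pose proof (sh_pos f Hf (z + d) ltac:(lra)).
    assert (A' * f z < - k (y + 1)).
    { apply Rmult_lt_reg_l with (/ A'); [apply Rinv_0_lt_compat; lra|].
      rewrite <- Rmult_assoc, Rinv_l, Rmult_1_l by lra. unfold Rdiv in Hz2; lra. }
    nra. }
  destruct (k_mvt (y + 1) z ltac:(lra) Hz1) as [c [Ec Hc]].
  exists c; split; [lra|]. apply Rnot_lt_le; intro; nra.
- destruct (k_mvt y (y + 1) Hy ltac:(lra)) as [c [Ec Hc]].
  exists c; split; [lra|].
  unfold k at 2 in Ec; rewrite Ey in Ec.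
  apply Rnot_lt_le; intro; nra.
Qed.

Lemma shifted_difference_level_at_most_one L : L <= 0 ->
  at_most_one (shifted_difference_level f A A' d L).
Proof.
intros HL. apply at_most_one_of_lt; intros x y Hx Hy Hxy.
destruct (dk_root_between L x y Hx Hy Hxy) as [c1 [Hc1 E1]].
destruct (dk_nonneg_beyond_level L y HL Hy) as [c2 [Hc2 E2]].
pose proof (dk_neg_after_root c1 c2 ltac:(destruct Hx; lra) ltac:(lra) E1).
lra.
Qed.

Lemma shifted_difference_level_coef_lt L y : 0 <= L ->
  shifted_difference_level f A A' d L y -> A' < A.
Proof.
intros HL [Hy Ey].
pose proof (sh_decreasing f Hf y (y + d) Hy ltac:(lra)).
pose proof (sh_pos f Hf (y + d) ltac:(lra)).
nra.
Qed.

End ShiftedDifference.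

Lemma f_abc_right f1 f2 a b c x : - b < x -> f_abc f1 f2 a b c x = a * f1 (x + b) + c.
Proof. intros H; unfold f_abc; destruct (Rlt_dec (- b) x); [auto | lra]. Qed.

Lemma f_abc_left f1 f2 a b c x : x < - b -> f_abc f1 f2 a b c x = - a * f2 (- x - b) + c.
Proof. intros H; unfold f_abc; destruct (Rlt_dec (- b) x); [lra | auto]. Qed.

Lemma f_abc_affine f1 f2 a b c x : f_abc f1 f2 a b c x = a * f_abc f1 f2 1 b 0 x + c.
Proof. unfold f_abc; destruct (Rlt_dec (- b) x); ring. Qed.

Section SamePole.
Variables f1 f2 : R -> R.
Hypotheses (H1 : strongly_hyperbolic f1) (H2 : strongly_hyperbolic f2).
Variable b : R.

Lemma f_abc_unit_neq0 x : x <> - b -> f_abc f1 f2 1 b 0 x <> 0.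
Proof.
intros Hx. destruct (Rtotal_order x (- b)) as [h|[h|h]]; [|lra|].
- rewrite f_abc_left by auto. pose proof (sh_pos f2 H2 (- x - b) ltac:(lra)); lra.
- rewrite f_abc_right by auto. pose proof (sh_pos f1 H1 (x + b) ltac:(lra)); lra.
Qed.

(* The branch for x > -b is positive and the one for x < -b negative. *)
Lemma f_abc_unit_level_at_most_one v :
  at_most_one (fun x => x <> - b /\ f_abc f1 f2 1 b 0 x = v).
Proof.
apply at_most_one_of_lt; intros x y [Hx Ex] [Hy Ey] Hxy.
destruct (Rtotal_order x (- b)) as [hx|[hx|hx]]; [|lra|];
  destruct (Rtotal_order y (- b)) as [hy|[hy|hy]]; try lra.
- rewrite f_abc_left in Ex, Ey by auto.
  pose proof (sh_decreasing f2 H2 (- y - b) (- x - b) ltac:(lra) ltac:(lra)); lra.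
- rewrite f_abc_left in Ex by auto. rewrite f_abc_right in Ey by auto.
  pose proof (sh_pos f2 H2 (- x - b) ltac:(lra));
  pose proof (sh_pos f1 H1 (y + b) ltac:(lra)); lra.
- rewrite f_abc_right in Ex, Ey by auto.
  pose proof (sh_decreasing f1 H1 (x + b) (y + b) ltac:(lra) ltac:(lra)); lra.
Qed.

End SamePole.

Definition meet_ff f1 f2 a b c a' b' c' (x : R) : Prop :=
  x <> - b /\ x <> - b' /\ f_abc f1 f2 a b c x = f_abc f1 f2 a' b' c' x.

Lemma meet_ff_sym f1 f2 a b c a' b' c' x :
  meet_ff f1 f2 a b c a' b' c' x -> meet_ff f1 f2 a' b' c' a b c x.
Proof. intros (Hb & Hb' & E); repeat split; auto. Qed.

Lemma meet_ff_same_pole_empty f1 f2 a b c a' x :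
  strongly_hyperbolic f1 -> strongly_hyperbolic f2 -> a <> a' ->
  ~ meet_ff f1 f2 a b c a' b c x.
Proof.
intros H1 H2 Ha (Hx & _ & E).
rewrite (f_abc_affine _ _ a), (f_abc_affine _ _ a') in E.
apply (f_abc_unit_neq0 f1 f2 H1 H2 b x Hx).
apply Rmult_eq_reg_l with (a - a'); lra.
Qed.

Lemma meet_ff_same_pole_at_most_one f1 f2 a b c a' c' :
  strongly_hyperbolic f1 -> strongly_hyperbolic f2 -> c <> c' ->
  at_most_one (meet_ff f1 f2 a b c a' b c').
Proof.
intros H1 H2 Hc.
eapply at_most_one_sub;
  [| exact (f_abc_unit_level_at_most_one f1 f2 H1 H2 b ((c' - c) / (a - a')))].
intros x (Hx & _ & E).
rewrite (f_abc_affine _ _ a), (f_abc_affine _ _ a') in E.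
assert (Ha : a - a' <> 0) by (intro Ha; apply Hc; nra).
split; auto. field_simplify_eq; [lra | auto].
Qed.

Section DistinctPoles.
Variables f1 f2 : R -> R.
Hypotheses (H1 : strongly_hyperbolic f1) (H2 : strongly_hyperbolic f2).
Variables a b c a' b' c' : R.
Hypotheses (Ha : 0 < a) (Ha' : 0 < a') (Hb : b' < b).

Let meet_left x := x < - b /\ a' * f2 (- x - b') - a * f2 (- x - b) = c' - c.
Let meet_middle x := - b < x < - b' /\ a * f1 (x + b) + a' * f2 (- x - b') = c' - c.
Let meet_right x := - b' < x /\ a * f1 (x + b) - a' * f1 (x + b') = c' - c.

Lemma meet_ff_split x : meet_ff f1 f2 a b c a' b' c' x ->
  meet_left x \/ meet_middle x \/ meet_right x.
Proof.
intros (Hx & Hx' & E).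
destruct (Rtotal_order x (- b)) as [h|[h|h]]; [|lra|].
- left. rewrite f_abc_left, f_abc_left in E by lra. split; [auto | lra].
- destruct (Rtotal_order x (- b')) as [h'|[h'|h']]; [|lra|].
  + right; left. rewrite f_abc_right, f_abc_left in E by lra. split; [lra | lra].
  + right; right. rewrite f_abc_right, f_abc_right in E by lra. split; [auto | lra].
Qed.

Lemma meet_left_level x : meet_left x ->
  exists y, shifted_difference_level f2 a' a (b - b') (c' - c) y /\ x = - y - b.
Proof.
intros [Hx E]. exists (- x - b); repeat split; [lra | | ring].
replace (- x - b + (b - b')) with (- x - b') by ring. exact E.
Qed.

Lemma meet_right_level x : meet_right x ->
  exists y, shifted_difference_level f1 a a' (b - b') (c' - c) y /\ x = y - b'.
Proof.
intros [Hx E]. exists (x + b'); repeat split; [lra | | ring].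
replace (x + b' + (b - b')) with (x + b) by ring. exact E.
Qed.

Lemma meet_middle_at_most_two : at_most_two meet_middle.
Proof.
apply (strictly_convex_on_level_at_most_two (fun x => - b < x < - b')
  (fun x => a * f1 (x + b) + a' * f2 (- x - b'))).
apply strictly_convex_on_add.
- apply (strictly_convex_on_sub _ (fun x => - b < x)); [intros; lra|].
  apply strictly_convex_on_translate; auto. apply sh_convex; auto.
- apply (strictly_convex_on_sub _ (fun x => x < - b')); [intros; lra|].
  apply strictly_convex_on_reflect; auto. apply sh_convex; auto.
Qed.

Lemma meet_middle_pos x : meet_middle x -> c < c'.
Proof.
intros [Hx E].
pose proof (sh_pos f1 H1 (x + b) ltac:(lra)).
pose proof (sh_pos f2 H2 (- x - b') ltac:(lra)).
nra.
Qed.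

Lemma meet_middle_left_excl x y : meet_middle x -> meet_left y -> False.
Proof.
intros [Hx E] [Hy E'].
pose proof (sh_decreasing f2 H2 (- x - b') (- y - b') ltac:(lra) ltac:(lra)).
pose proof (sh_pos f1 H1 (x + b) ltac:(lra)).
pose proof (sh_pos f2 H2 (- y - b) ltac:(lra)).
nra.
Qed.

Lemma meet_middle_right_excl x y : meet_middle x -> meet_right y -> False.
Proof.
intros [Hx E] [Hy E'].
pose proof (sh_decreasing f1 H1 (x + b) (y + b) ltac:(lra) ltac:(lra)).
pose proof (sh_pos f2 H2 (- x - b') ltac:(lra)).
pose proof (sh_pos f1 H1 (y + b') ltac:(lra)).
nra.
Qed.

Lemma meet_left_right_excl x y : c <= c' -> meet_left x -> meet_right y -> False.
Proof.
intros Hc Hx Hy.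
destruct (meet_left_level x Hx) as [u [Hu _]], (meet_right_level y Hy) as [v [Hv _]].
pose proof (shifted_difference_level_coef_lt f2 H2 a' a (b - b') Ha ltac:(lra)
  (c' - c) u ltac:(lra) Hu).
pose proof (shifted_difference_level_coef_lt f1 H1 a a' (b - b') Ha' ltac:(lra)
  (c' - c) v ltac:(lra) Hv).
lra.
Qed.

Lemma meet_left_at_most_two : at_most_two meet_left.
Proof.
exact (at_most_two_image _ _ _ meet_left_level
  (shifted_difference_level_at_most_two f2 H2 a' a (b - b') Ha' Ha ltac:(lra) (c' - c))).
Qed.

Lemma meet_right_at_most_two : at_most_two meet_right.
Proof.
exact (at_most_two_image _ _ _ meet_right_level
  (shifted_difference_level_at_most_two f1 H1 a a' (b - b') Ha Ha' ltac:(lra) (c' - c))).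
Qed.

Lemma meet_left_at_most_one : c' <= c -> at_most_one meet_left.
Proof.
intros Hc. exact (at_most_one_image _ _ _ meet_left_level
  (shifted_difference_level_at_most_one f2 H2 a' a (b - b') Ha' Ha ltac:(lra) (c' - c)
    ltac:(lra))).
Qed.

Lemma meet_right_at_most_one : c' <= c -> at_most_one meet_right.
Proof.
intros Hc. exact (at_most_one_image _ _ _ meet_right_level
  (shifted_difference_level_at_most_one f1 H1 a a' (b - b') Ha Ha' ltac:(lra) (c' - c)
    ltac:(lra))).
Qed.

Lemma meet_ff_at_most_two_lt : at_most_two (meet_ff f1 f2 a b c a' b' c').
Proof.
destruct (Rle_or_lt c' c) as [Hc|Hc].
- apply (at_most_two_union _ meet_left meet_right).
  + intros x Hx. destruct (meet_ff_split x Hx) as [|[Hm|]]; auto.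
    pose proof (meet_middle_pos x Hm); lra.
  + apply meet_left_at_most_one; auto.
  + apply meet_right_at_most_one; auto.
- apply (at_most_two_union_excl _ meet_middle (fun x => meet_left x \/ meet_right x)).
  + intros x Hx; destruct (meet_ff_split x Hx) as [|[|]]; auto.
  + apply meet_middle_at_most_two.
  + apply (at_most_two_union_excl _ meet_left meet_right); auto.
    * apply meet_left_at_most_two.
    * apply meet_right_at_most_two.
    * intros x y; apply meet_left_right_excl; lra.
  + intros x y Hx [Hy|Hy]; eauto using meet_middle_left_excl, meet_middle_right_excl.
Qed.

Lemma meet_ff_at_most_one_lt : c = c' -> at_most_one (meet_ff f1 f2 a b c a' b' c').
Proof.
intros Hc.
apply (at_most_one_union_excl _ meet_left meet_right).
- intros x Hx. destruct (meet_ff_split x Hx) as [|[Hm|]]; auto.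
  pose proof (meet_middle_pos x Hm); lra.
- apply meet_left_at_most_one; lra.
- apply meet_right_at_most_one; lra.
- intros x y; apply meet_left_right_excl; lra.
Qed.

End DistinctPoles.

Lemma meet_ff_at_most_two f1 f2 a b c a' b' c' :
  strongly_hyperbolic f1 -> strongly_hyperbolic f2 -> 0 < a -> 0 < a' -> b <> b' ->
  at_most_two (meet_ff f1 f2 a b c a' b' c').
Proof.
intros H1 H2 Ha Ha' Hb.
destruct (Rtotal_order b b') as [h|[h|h]]; [|lra|].
- apply (at_most_two_sub _ _ (meet_ff_sym f1 f2 a b c a' b' c')).
  apply meet_ff_at_most_two_lt; auto.
- apply meet_ff_at_most_two_lt; auto.
Qed.

Lemma meet_ff_at_most_one f1 f2 a b c a' b' :
  strongly_hyperbolic f1 -> strongly_hyperbolic f2 -> 0 < a -> 0 < a' -> b <> b' ->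
  at_most_one (meet_ff f1 f2 a b c a' b' c).
Proof.
intros H1 H2 Ha Ha' Hb.
destruct (Rtotal_order b b') as [h|[h|h]]; [|lra|].
- apply (at_most_one_sub _ _ (meet_ff_sym f1 f2 a b c a' b' c)).
  apply meet_ff_at_most_one_lt; auto.
- apply meet_ff_at_most_one_lt; auto.
Qed.

Definition meet_fl f1 f2 a b c s t (x : R) : Prop :=
  x <> - b /\ f_abc f1 f2 a b c x = s * x + t.

(* On each branch the equation is a level set of a strictly convex function;
   a solution on each side would force a positive sum to vanish since s < 0. *)
Lemma meet_fl_at_most_two f1 f2 a b c s t :
  strongly_hyperbolic f1 -> strongly_hyperbolic f2 -> 0 < a -> s < 0 ->
  at_most_two (meet_fl f1 f2 a b c s t).
Proof.
intros H1 H2 Ha Hs.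
apply (at_most_two_union_excl _
  (fun x => x < - b /\ a * f2 (- x - b) + s * x = c - t)
  (fun x => - b < x /\ a * f1 (x + b) + - s * x = t - c)).
- intros x (Hx & E). destruct (Rtotal_order x (- b)) as [h|[h|h]]; [|lra|].
  + left. rewrite f_abc_left in E by auto. split; [auto | lra].
  + right. rewrite f_abc_right in E by auto. split; [auto | lra].
- apply strictly_convex_on_level_at_most_two, strictly_convex_on_add_linear.
  apply strictly_convex_on_reflect; auto. apply sh_convex; auto.
- apply strictly_convex_on_level_at_most_two, strictly_convex_on_add_linear.
  apply strictly_convex_on_translate; auto. apply sh_convex; auto.
- intros x y [Hx Ex] [Hy Ey].
  pose proof (sh_pos f2 H2 (- x - b) ltac:(lra)).
  pose proof (sh_pos f1 H1 (y + b) ltac:(lra)).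
  nra.
Qed.

Lemma meet_ll_at_most_one s t s' t' : ~ (s = s' /\ t = t') ->
  at_most_one (fun x => s * x + t = s' * x + t').
Proof.
intros Hne x y Ex Ey.
destruct (Req_dec s s') as [<-|Hs].
- exfalso. apply Hne. split; [reflexivity | lra].
- apply Rmult_eq_reg_l with (s - s'); lra.
Qed.

Definition graph (Z : R -> Prop) (h : R -> R) (p : Pt) : Prop :=
  exists x, Z x /\ p = (Some x, Some (h x)).

Lemma graph_at_most_one Z h : at_most_one Z -> at_most_one (graph Z h).
Proof. apply (at_most_one_image _ Z (fun x => (Some x, Some (h x)))); auto. Qed.

Lemma graph_at_most_two Z h : at_most_two Z -> at_most_two (graph Z h).
Proof. apply (at_most_two_image _ Z (fun x => (Some x, Some (h x)))); auto. Qed.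

Lemma fbar_fbar_point f1 f2 a b c a' b' c' p :
  fbar f1 f2 a b c p -> fbar f1 f2 a' b' c' p ->
  (b = b' /\ p = (Some (- b), None)) \/ (c = c' /\ p = (None, Some c)) \/
  graph (meet_ff f1 f2 a b c a' b' c') (f_abc f1 f2 a b c) p.
Proof.
intros [[x [Hx ->]]|[->| ->]] [[y [Hy E]]|[E|E]]; try discriminate.
- injection E as <- E. right; right. exists x. repeat split; auto.
- injection E as E. left; split; [lra | reflexivity].
- injection E as E. right; left; auto.
Qed.

Lemma fbar_lbar_point f1 f2 a b c s t p :
  fbar f1 f2 a b c p -> lbar s t p -> graph (meet_fl f1 f2 a b c s t) (f_abc f1 f2 a b c) p.
Proof.
intros [[x [Hx ->]]|[->| ->]] [[y E]|E]; try discriminate.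
injection E as <- E. exists x. repeat split; auto.
Qed.

Lemma lbar_lbar_point s t s' t' p : lbar s t p -> lbar s' t' p ->
  p = (None, None) \/ graph (fun x => s * x + t = s' * x + t') (fun x => s * x + t) p.
Proof.
intros [[x ->]| ->] [[y E]|E]; try discriminate; auto.
injection E as <- E. right. exists x. auto.
Qed.

Lemma fbar_fbar_at_most_two f1 f2 a b c a' b' c' :
  strongly_hyperbolic f1 -> strongly_hyperbolic f2 -> 0 < a -> 0 < a' ->
  fbar f1 f2 a b c <> fbar f1 f2 a' b' c' ->
  at_most_two (fun p => fbar f1 f2 a b c p /\ fbar f1 f2 a' b' c' p).
Proof.
intros H1 H2 Ha Ha' Hne.
destruct (Req_dec b b') as [<-|Hb]; destruct (Req_dec c c') as [<-|Hc].
- assert (Haa : a <> a') by (intros <-; auto).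
  apply (at_most_two_union _ (fun p => p = (Some (- b), None))
    (fun p => p = (None, Some c))); try apply at_most_one_eq.
  intros p [Hp Hq].
  destruct (fbar_fbar_point _ _ _ _ _ _ _ _ p Hp Hq) as [[_ ->]|[[_ ->]|[x [Hx _]]]]; auto.
  exfalso; exact (meet_ff_same_pole_empty f1 f2 a b c a' x H1 H2 Haa Hx).
- apply (at_most_two_union _ (fun p => p = (Some (- b), None))
    (graph (meet_ff f1 f2 a b c a' b c') (f_abc f1 f2 a b c))).
  + intros p [Hp Hq].
    destruct (fbar_fbar_point _ _ _ _ _ _ _ _ p Hp Hq) as [[_ ->]|[[E _]|]]; auto.
    contradiction.
  + apply at_most_one_eq.
  + apply graph_at_most_one, meet_ff_same_pole_at_most_one; auto.
- apply (at_most_two_union _ (fun p => p = (None, Some c))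
    (graph (meet_ff f1 f2 a b c a' b' c) (f_abc f1 f2 a b c))).
  + intros p [Hp Hq].
    destruct (fbar_fbar_point _ _ _ _ _ _ _ _ p Hp Hq) as [[E _]|[[_ ->]|]]; auto.
    contradiction.
  + apply at_most_one_eq.
  + apply graph_at_most_one, meet_ff_at_most_one; auto.
- apply (at_most_two_sub _ (graph (meet_ff f1 f2 a b c a' b' c') (f_abc f1 f2 a b c))).
  + intros p [Hp Hq].
    destruct (fbar_fbar_point _ _ _ _ _ _ _ _ p Hp Hq) as [[E _]|[[E _]|]];
      auto; contradiction.
  + apply graph_at_most_two, meet_ff_at_most_two; auto.
Qed.

Lemma fbar_lbar_at_most_two f1 f2 a b c s t :
  strongly_hyperbolic f1 -> strongly_hyperbolic f2 -> 0 < a -> s < 0 ->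
  at_most_two (fun p => fbar f1 f2 a b c p /\ lbar s t p).
Proof.
intros H1 H2 Ha Hs.
apply (at_most_two_sub _ (graph (meet_fl f1 f2 a b c s t) (f_abc f1 f2 a b c))).
- intros p [Hp Hq]. apply fbar_lbar_point; auto.
- apply graph_at_most_two, meet_fl_at_most_two; auto.
Qed.

Lemma lbar_lbar_at_most_two s t s' t' : lbar s t <> lbar s' t' ->
  at_most_two (fun p => lbar s t p /\ lbar s' t' p).
Proof.
intros Hne.
apply (at_most_two_union _ (fun p => p = (None, None))
  (graph (fun x => s * x + t = s' * x + t') (fun x => s * x + t))).
- intros p [Hp Hq]. apply lbar_lbar_point; auto.
- apply at_most_one_eq.
- apply graph_at_most_one, meet_ll_at_most_one. intros [<- <-]; auto.
Qed.

Theorem theorem4p8 (f1 f2 : R -> R) :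
  strongly_hyperbolic f1 -> strongly_hyperbolic f2 ->
  forall C D : Pt -> Prop,
    in_Cminus f1 f2 C -> in_Cminus f1 f2 D -> C <> D ->
    forall p q r : Pt,
      C p -> D p -> C q -> D q -> C r -> D r ->
      p = q \/ q = r \/ p = r.
Proof.
intros H1 H2 C D HC HD Hne p q r Cp Dp Cq Dq Cr Dr.
assert (Hmeet : at_most_two (fun p => C p /\ D p)).
{ destruct HC as [(a & b & c & Ha & ->)|(s & t & Hs & ->)];
  destruct HD as [(a' & b' & c' & Ha' & ->)|(s' & t' & Hs' & ->)].
  - apply fbar_fbar_at_most_two; auto.
  - apply fbar_lbar_at_most_two; auto.
  - apply (at_most_two_sub _ _ (fun p '(conj Cp Dp) => conj Dp Cp)).
    apply fbar_lbar_at_most_two; auto.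
  - apply lbar_lbar_at_most_two; auto. }
apply Hmeet; split; assumption.
Qed.
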